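(* Let $G$ be a finitely generated residually finite group with profinite completion $\hat G$, let $H$ be a finite group, let $\bar w\in F^r(y_1,\dots,y_k,x_1,\dots,x_n)\cap Sys(Fin)$, and let $\bar a\in\hat G^k$. Then there exists $\bar u\in\hat G^n$ such that for every $N\in\mathfrak{M}$ and every $\bar f\in (H^{G_N})^k$ there exists $\bar\phi\in (H^{G_N})^n$ with $\bar w((\bar f,\bar a_N),(\bar\phi,\bar u_N))=1$ in $H\wr G_N$. (Such $\bar u$ is called an $(H,\bar a)$-universal solution of $\bar w$.)
   Context: $F=F(\bar y,\bar x)$ is the free group on constant symbols $y_1,\dots,y_k$ and variable symbols $x_1,\dots,x_n$; $\bar w\in F^r$ is a system of equations, evaluated by substitution in any group. $Sys(Fin)$ is the set of finite systems $\bar w$ solvable in every finite group $Q$, i.e. for every $\bar c\in Q^k$ there is $\bar z\in Q^n$ with $\bar w(\bar c,\bar z)=1$. $\mathfrak{M}$ is the set of normal subgroups of finite index of $G$; for $N\in\mathfrak{M}$, $G_N=G/N$, and $\eta_N:\hat G\to G_N$ is the canonical epimorphism from the profinite completion $\hat G=\varprojlim G_N$. For $g\in\hat G$, $g_N=\eta_N(g)$, and for tuples $\bar g=(g_1,\dots,g_m)$, $\bar g_N=((g_1)_N,\dots,(g_m)_N)$. For $\bar f=(f_1,\dots,f_m)\in (H^{G_N})^m$ and $\bar g\in G_N^m$, $(\bar f,\bar g)=((f_1,g_1),\dots,(f_m,g_m))\in (H\wr G_N)^m$. The wreath product $H\wr Q$ is $H^Q\rtimes Q$ with $(g.f)(x)=f(xg)$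 and $(f,g)(f',g')=(f\,(g.f'),gg')$. *)

From HB Require Import structures.
From mathcomp Require Import all_boot all_fingroup.

Set Implicit Arguments.
Unset Strict Implicit.
Unset Printing Implicit Defensive.

Local Open Scope group_scope.

(* An element of the free group is represented by any word term denoting it;*)
(* evaluation in a group does not depend on the chosen representative.      *)
Inductive gword (X : Type) : Type :=
  | WLetter of X
  | WOne
  | WMul of gword X & gword X
  | WInv of gword X.
Arguments WOne {X}.

(* Evaluation with explicitly given operations (used for the wreath product,
   whose elements are represented via coset representatives). *)
Fixpoint weval_with (X T : Type) (mul : T -> T -> T) (inv : T -> T) (one : T)
    (v : X -> T) (w : gword X) : T :=
  match w with
  | WLetter x => v x
  | WOne => one
  | WMul a b => mul (weval_with mul inv one v a) (weval_with mul inv one v b)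
  | WInv a => inv (weval_with mul inv one v a)
  end.

Definition weval (X : Type) (T : groupType) (v : X -> T) (w : gword X) : T :=
  weval_with (fun a b : T => a * b) (fun a : T => a^-1) 1 v w.

(* F(y_1..y_k, x_1..x_n): alphabet 'I_k (constants) + 'I_n (variables). *)
Definition FW (k n : nat) := gword ('I_k + 'I_n).

Definition val2 (T : Type) (k n : nat) (c : 'I_k -> T) (z : 'I_n -> T)
    : 'I_k + 'I_n -> T :=
  fun l => match l with inl i => c i | inr j => z j end.

Definition SysFin (k n r : nat) (w : 'I_r -> FW k n) : Prop :=
  forall (Q : finGroupType) (c : 'I_k -> Q),
    exists z : 'I_n -> Q, forall i, weval (val2 c z) (w i) = 1.

Definition finitely_generated (G : groupType) : Prop :=
  exists (m : nat) (s : 'I_m -> G),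
    forall g : G, exists t : gword 'I_m, weval s t = g.

Definition fi_normal (G : groupType) (N : G -> Prop) : Prop :=
  [/\ N 1,
      (forall x y, N x -> N y -> N (x * y)),
      (forall x, N x -> N x^-1),
      (forall x g, N x -> N (g^-1 * x * g)) &
      (exists s : seq G, forall g, exists2 x, x \in s & N (x^-1 * g))].

Definition residually_finite (G : groupType) : Prop :=
  forall g : G, g <> 1 -> exists N, fi_normal N /\ ~ N g.

(* Profinite completion: hat G = lim G/N over the finite-index normal
   subgroups N, ordered by reverse inclusion.  An element is a compatible
   family (g_N)_N of cosets g_N in G/N, represented by a choice of
   representatives  a N : G  (values at non-fi-normal N are irrelevant);
   compatibility: for N <= M, a N and a M lie in the same coset of M. *)
Definition compatible (G : groupType) (a : (G -> Prop) -> G) : Prop :=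
  forall N M : G -> Prop, fi_normal N -> fi_normal M ->
    (forall x, N x -> M x) -> M ((a N)^-1 * a M).

Definition profinite (G : groupType) := {a : (G -> Prop) -> G | compatible a}.

Definition eta (G : groupType) (N : G -> Prop) (g : profinite G) : G :=
  sval g N.

(* Wreath product H wr G_N = H^{G_N} x| G_N.  An element of H^{G_N} is      *)
(* represented by a function f : G -> H that is constant on N-cosets, and   *)
(* an element of G_N by a representative in G.                              *)
(*   (f,g)(f',g') = (f (g.f'), g g'),  (g.f)(x) = f(x g).                    *)
Definition N_invariant (G : groupType) (H : finGroupType) (N : G -> Prop)
    (f : G -> H) : Prop :=
  forall x y : G, N (x^-1 * y) -> f x = f y.

Definition wr_mul (G : groupType) (H : finGroupType)
    (p q : (G -> H) * G) : (G -> H) * G :=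
  (fun x => p.1 x * q.1 (x * p.2), p.2 * q.2).

Definition wr_inv (G : groupType) (H : finGroupType)
    (p : (G -> H) * G) : (G -> H) * G :=
  (fun x => (p.1 (x * p.2^-1))^-1, p.2^-1).

Definition wr_one (G : groupType) (H : finGroupType) : (G -> H) * G :=
  (fun _ => 1, 1).

Definition wr_eval (G : groupType) (H : finGroupType) (X : Type)
    (v : X -> (G -> H) * G) (w : gword X) : (G -> H) * G :=
  weval_with (@wr_mul G H) (@wr_inv G H) (@wr_one G H) v w.

Definition wr_is_one (G : groupType) (H : finGroupType) (N : G -> Prop)
    (p : (G -> H) * G) : Prop :=
  (forall x, p.1 x = 1) /\ N p.2.

From mathcomp Require Import all_boot all_fingroup.
From mathcomp Require Import boolp classical_sets filter.

(* A finite family N_1, ..., N_m of normal subgroups of finite index is handled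
   by one finite group: let Omega be the disjoint union, over i and over all
   encodings F of the H-components of the constants, of the coset spaces G/N_i,
   and let Q be the group of permutations (o, h) |-> (o g, h phi(o)) of
   Omega * H, with g in G and phi : Omega -> H.  On the block of (i, F) the
   group Q restricts to H wr G_{N_i}, so solving w in Q with the constants
   mapped to (decoding of F, c) yields a G-part v that is an (H, c)-universal
   solution modulo every N_i at once; for c take a representative of a modulo
   the intersection of the N_i.  An ultrafilter on finite lists of subgroups then
   glues these approximate solutions into an element of the profinite
   completion. *)

Set Implicit Arguments.
Unset Strict Implicit.
Unset Printing Implicit Defensive.

Local Open Scope group_scope.

Lemma fi_normal_cover (G : groupType) (N : G -> Prop) :
  fi_normal N -> exists s : seq G, forall g, exists2 x, x \in s & N (x^-1 * g).
Proof. by case. Qed.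

Section FiNormal.
Variables (G : groupType) (N : G -> Prop).
Hypothesis fiN : fi_normal N.

Lemma fi_mem1 : N 1. Proof. by case: fiN. Qed.
Lemma fi_memM x y : N x -> N y -> N (x * y). Proof. by case: fiN => _ + _ _ _; apply. Qed.
Lemma fi_memV x : N x -> N x^-1. Proof. by case: fiN => _ _ + _ _; apply. Qed.
Lemma fi_memJ x g : N x -> N (g^-1 * x * g). Proof. by case: fiN => _ _ _ + _; apply. Qed.

Lemma fi_refl x : N (x^-1 * x). Proof. by rewrite mulVg; apply: fi_mem1. Qed.

Lemma fi_sym x y : N (x^-1 * y) -> N (y^-1 * x).
Proof. by move/fi_memV; rewrite invMg invgK. Qed.

Lemma fi_trans x y z : N (x^-1 * y) -> N (y^-1 * z) -> N (x^-1 * z).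
Proof. by move=> xy yz; have := fi_memM xy yz; rewrite -mulgA mulKVg. Qed.

Lemma fi_mulr x y g : N (x^-1 * y) -> N ((x * g)^-1 * (y * g)).
Proof. by move/(fi_memJ g); rewrite invMg !mulgA. Qed.

Lemma fi_mull x y g : N (x^-1 * y) -> N ((g * x)^-1 * (g * y)).
Proof. by rewrite invMg -mulgA mulKg. Qed.

Lemma fi_inv x y : N (x^-1 * y) -> N (x^-1^-1 * y^-1).
Proof. by move/fi_sym/(fi_memJ y^-1); rewrite !invgK mulKVg. Qed.

End FiNormal.

Lemma fi_normalT (G : groupType) : fi_normal (fun _ : G => True).
Proof. by split=> //; exists [:: 1] => g; exists 1; rewrite ?inE. Qed.

Lemma fi_normalI (G : groupType) (N1 N2 : G -> Prop) :
  fi_normal N1 -> fi_normal N2 -> fi_normal (fun y => N1 y /\ N2 y).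
Proof.
move=> fiN1 fiN2; split.
- by split; apply: fi_mem1.
- by move=> x y [? ?] [? ?]; split; apply: fi_memM.
- by move=> x [? ?]; split; apply: fi_memV.
- by move=> x g [? ?]; split; apply: fi_memJ.
have [s1 cover1] := fi_normal_cover fiN1; have [s2 cover2] := fi_normal_cover fiN2.
have /choice [meet meetP] (x : G * G) : exists z,
    (exists g, N1 (x.1^-1 * g) /\ N2 (x.2^-1 * g)) -> N1 (x.1^-1 * z) /\ N2 (x.2^-1 * z).
  by have [[g ?]|no] := pselect (exists g, N1 (x.1^-1 * g) /\ N2 (x.2^-1 * g));
    [exists g | exists 1].
exists [seq meet (x1, x2) | x1 <- s1, x2 <- s2] => g.
have [x1 s1x1 Nx1] := cover1 g; have [x2 s2x2 Nx2] := cover2 g.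
have [/= m1 m2] := meetP (x1, x2) (ex_intro _ g (conj Nx1 Nx2)).
exists (meet (x1, x2)); first exact: allpairs_f.
by split; [exact: (fi_trans fiN1 (fi_sym fiN1 m1) Nx1)
          | exact: (fi_trans fiN2 (fi_sym fiN2 m2) Nx2)].
Qed.

Lemma fi_normal_bigcap (G : groupType) (I : finType) (Ns : I -> G -> Prop) :
  (forall i, fi_normal (Ns i)) -> fi_normal (fun y => forall i, Ns i y).
Proof.
move=> fiNs.
suff ->: (fun y => forall i, Ns i y) = (fun y => forall i, i \in enum I -> Ns i y).
  elim: (enum I) => [|i s IHs].
    by congr fi_normal: (@fi_normalT G); apply/funext => y; apply/propext.
  congr fi_normal: (fi_normalI (fiNs i) IHs); apply/funext => y; apply/propext.
  split=> [[Ni Ns_] j|Nis]; first by rewrite inE => /predU1P [->|/Ns_].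
  by split=> [|j sj]; apply: Nis; rewrite inE ?eqxx ?sj ?orbT.
apply/funext => y; apply/propext.
by split=> Nis i; [move=> _; apply: Nis | apply: Nis; rewrite mem_enum].
Qed.

Section WreathCongruence.
Variables (G : groupType) (H : finGroupType) (N : G -> Prop) (X : Type).
Variables v v' : X -> (G -> H) * G.
Hypotheses (fiN : fi_normal N) (v_inv : forall x, N_invariant N (v x).1).
Hypotheses (v_eq : forall x, (v x).1 =1 (v' x).1).
Hypothesis v_cong : forall x, N ((v x).2^-1 * (v' x).2).

Lemma wr_eval_congr t :
  [/\ N_invariant N (wr_eval v t).1, (wr_eval v t).1 =1 (wr_eval v' t).1
    & N ((wr_eval v t).2^-1 * (wr_eval v' t).2)].
Proof.
elim: t => [x||a [inv_a eq_a cong_a] b [inv_b eq_b cong_b]|a [inv_a eq_a cong_a]] //=.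
- by split; [apply: v_inv | apply: v_eq | apply: v_cong].
- by split=> //; apply: fi_refl.
- split=> [y y' Nyy'|y|].
  + by rewrite (inv_a _ _ Nyy'); congr (_ * _); apply: inv_b; apply: (fi_mulr fiN).
  + by rewrite eq_a -eq_b; congr (_ * _); apply: inv_b; apply: fi_mull.
  + exact: (fi_trans fiN (fi_mulr fiN (wr_eval v b).2 cong_a)
                         (fi_mull (wr_eval v' a).2 cong_b)).
- have cong_inv := fi_inv fiN cong_a.
  split=> [y y' Nyy'|y|//].
  + by congr (_^-1); apply: inv_a; apply: (fi_mulr fiN).
  + by rewrite -eq_a; congr (_^-1); apply: inv_a; apply: fi_mull.
Qed.

Lemma wr_is_one_congr t : wr_is_one N (wr_eval v t) -> wr_is_one N (wr_eval v' t).
Proof.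
have [_ eq_t cong_t] := wr_eval_congr t; case=> one1 one2; split=> [y|].
  by rewrite -eq_t.
by have := fi_memM fiN one2 cong_t; rewrite mulKVg.
Qed.

End WreathCongruence.

Definition universal_mod (G : groupType) (H : finGroupType) (k n r : nat)
    (w : 'I_r -> FW k n) (N : G -> Prop) (c : 'I_k -> G) (v : 'I_n -> G) :=
  forall f : 'I_k -> G -> H, (forall l, N_invariant N (f l)) ->
  exists phi : 'I_n -> G -> H, (forall j, N_invariant N (phi j)) /\
    forall i, wr_is_one N
      (wr_eval (val2 (fun l => (f l, c l)) (fun j => (phi j, v j))) (w i)).

Lemma universal_mod_congr (G : groupType) (H : finGroupType) (k n r : nat)
    (w : 'I_r -> FW k n) (N : G -> Prop) c c' v v' :
  fi_normal N -> (forall l, N ((c l)^-1 * c' l)) -> (forall j, N ((v j)^-1 * v' j)) ->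
  universal_mod H w N c v -> universal_mod H w N c' v'.
Proof.
move=> fiN cc' vv' univ f f_inv; have [phi [phi_inv solved]] := univ f f_inv.
exists phi; split=> // i; apply: wr_is_one_congr (solved i) => //.
- by case=> [l|j]; [apply: f_inv | apply: phi_inv].
- by case.
- by case=> [l|j]; [apply: cc' | apply: vv'].
Qed.

Section InducedPerm.
Variables (G : groupType) (A : Type) (Omega : finType) (pi : A -> G -> Omega).
Hypothesis pi_mulr :
  forall a a' y y' g, pi a y = pi a' y' -> pi a (y * g) = pi a' (y' * g).

Definition ind_act (o : Omega) (g : G) : Omega :=
  if pselect (exists p : A * G, pi p.1 p.2 = o) is left ex_o then
    let p := projT1 (cid ex_o) in pi p.1 (p.2 * g)
  else o.

Lemma ind_actE a y g : ind_act (pi a y) g = pi a (y * g).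
Proof.
rewrite /ind_act; case: pselect => [ex_o|[]]; last by exists (a, y).
by case: (cid ex_o) => -[a' y'] /= /pi_mulr.
Qed.

Lemma ind_act_out o g : ~ (exists p : A * G, pi p.1 p.2 = o) -> ind_act o g = o.
Proof. by rewrite /ind_act; case: pselect. Qed.

Lemma ind_act1 o : ind_act o 1 = o.
Proof.
have [[[a y] <-]|out] := pselect (exists p : A * G, pi p.1 p.2 = o).
  by rewrite ind_actE mulg1.
exact: ind_act_out.
Qed.

Lemma ind_actM o g h : ind_act o (g * h) = ind_act (ind_act o g) h.
Proof.
have [[[a y] <-]|out] := pselect (exists p : A * G, pi p.1 p.2 = o).
  by rewrite !ind_actE mulgA.
by rewrite !ind_act_out.
Qed.

Lemma ind_act_inj g : injective (ind_act^~ g).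
Proof.
by apply: (can_inj (g := ind_act^~ g^-1)) => o; rewrite -ind_actM mulgV ind_act1.
Qed.

Definition ind_perm (g : G) : {perm Omega} := perm (@ind_act_inj g).

Lemma ind_permE a y g : ind_perm g (pi a y) = pi a (y * g).
Proof. by rewrite permE ind_actE. Qed.

Lemma ind_permM : {morph ind_perm : g h / g * h}.
Proof. by move=> g h; apply/permP => o; rewrite permM !permE ind_actM. Qed.

Lemma ind_perm1 : ind_perm 1 = 1.
Proof. by apply/permP => o; rewrite permE perm1 ind_act1. Qed.

Variable H : finGroupType.

Definition wr_fun (phi : Omega -> H) (g : G) (p : Omega * H) : Omega * H :=
  (ind_perm g p.1, p.2 * phi p.1).

Lemma wr_fun_inj phi g : injective (wr_fun phi g).
Proof.
move=> [o h] [o' h'] [/perm_inj eq_o]; rewrite /= -{}eq_o => /mulIg.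
by move->.
Qed.

Definition wr_perm phi g : {perm Omega * H} := perm (@wr_fun_inj phi g).

Lemma wr_permM phi g psi h :
  wr_perm phi g * wr_perm psi h = wr_perm (fun o => phi o * psi (ind_perm g o)) (g * h).
Proof.
by apply/permP => -[o x]; rewrite permM !permE /wr_fun /= ind_permM permM mulgA.
Qed.

Lemma wr_perm1 : wr_perm (fun _ => 1) 1 = 1.
Proof.
by apply/permP => -[o x]; rewrite permE perm1 /wr_fun /= ind_perm1 perm1 mulg1.
Qed.

Definition wr_perm_set : {set {perm Omega * H}} :=
  [set p | `[< exists phi g, p = wr_perm phi g >]].

Lemma wr_perm_setP p :
  reflect (exists phi g, p = wr_perm phi g) (p \in wr_perm_set).
Proof. by rewrite inE; apply: asboolP. Qed.

Lemma wr_perm_group_set : group_set wr_perm_set.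
Proof.
apply/group_setP; split.
  by apply/wr_perm_setP; exists (fun _ => 1), 1; rewrite wr_perm1.
move=> _ _ /wr_perm_setP [phi [g ->]] /wr_perm_setP [psi [h ->]].
by apply/wr_perm_setP; rewrite wr_permM; do 2 eexists.
Qed.

Definition wr_perm_group := Group wr_perm_group_set.

Lemma wr_perm_in phi g : wr_perm phi g \in wr_perm_group.
Proof. by apply/wr_perm_setP; exists phi, g. Qed.

Lemma wr_perm_groupP p :
  p \in wr_perm_group -> exists q : (Omega -> H) * G, p = wr_perm q.1 q.2.
Proof. by move/wr_perm_setP => [phi [g ->]]; exists (phi, g). Qed.

Section Evaluation.
Variables (X : Type) (v : X -> subg_of wr_perm_group) (q : X -> (Omega -> H) * G).
Hypothesis vE : forall x, sgval (v x) = wr_perm (q x).1 (q x).2.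
Variable a : A.

Let assign x := ((q x).1 \o pi a, (q x).2).

Lemma weval_wr_perm t y h :
  sgval (weval v t) (pi a y, h) =
    (pi a (y * (wr_eval assign t).2), h * (wr_eval assign t).1 y).
Proof.
elim: t y h => [x||t IHt s IHs|t IHt] y h /=.
- by rewrite vE permE /wr_fun /= ind_permE.
- by rewrite !mulg1; apply: perm1.
- by rewrite permM IHt IHs !mulgA.
- set E := wr_eval assign t; set y' := y * E.2^-1.
  have -> : (pi a y, h) = sgval (weval v t) (pi a y', h * (E.1 y')^-1).
    by rewrite IHt !mulgVK.
  by rewrite permK.
Qed.

Lemma weval_wr_perm_eq1 (N : G -> Prop) t :
  (forall y, pi a y = pi a 1 -> N y) -> weval v t = 1 ->
  wr_is_one N (wr_eval assign t).
Proof.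
move=> piN vt1; set E := wr_eval assign t.
have eval y : (pi a y, 1) = (pi a (y * E.2), E.1 y).
  by rewrite -[E.1 y]mul1g -weval_wr_perm vt1; apply/esym/perm1.
split=> [y|]; first by case: (eval y).
by apply: piN; case: (eval 1); rewrite mul1g.
Qed.

End Evaluation.
End InducedPerm.

Section CosetCode.
Variables (G : groupType) (N : G -> Prop) (C : nat) (s : seq G).
Hypotheses (fiN : fi_normal N) (s_size : size s <= C).
Hypothesis s_cover : forall g, exists2 x, x \in s & N (x^-1 * g).

Definition coset_code (y : G) : {set 'I_C} :=
  [set x : 'I_C | `[< N ((nth 1 s x)^-1 * y) >]].

Lemma coset_codeP x y : x \in coset_code y -> N ((nth 1 s x)^-1 * y).
Proof. by rewrite inE => /asboolP. Qed.

Lemma coset_code_neq0 y : exists x, x \in coset_code y.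
Proof.
have [z s_z Nzy] := s_cover y.
have idx_z : index z s < C by apply: leq_trans s_size; rewrite index_mem.
by exists (Ordinal idx_z); rewrite inE nth_index //; apply/asboolP.
Qed.

Lemma eq_coset_code y y' : coset_code y = coset_code y' <-> N (y^-1 * y').
Proof.
split=> [eq_yy'|Nyy'].
  have [x x_y] := coset_code_neq0 y; have x_y' := x_y; rewrite eq_yy' in x_y'.
  exact: (fi_trans fiN (fi_sym fiN (coset_codeP x_y)) (coset_codeP x_y')).
apply/setP => x; rewrite !inE; apply: asbool_equiv_eq; split=> Nxy.
  exact: (fi_trans fiN Nxy Nyy').
exact: (fi_trans fiN Nxy (fi_sym fiN Nyy')).
Qed.

End CosetCode.

Section UniversalFamily.
Variables (G : groupType) (H : finGroupType) (k n r : nat) (w : 'I_r -> FW k n).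
Variables (I : finType) (Ns : I -> G -> Prop).
Hypothesis fiNs : forall i, fi_normal (Ns i).

Let reps i : seq G := projT1 (cid (fi_normal_cover (fiNs i))).
Let C := \max_i size (reps i).
Let code i := coset_code (Ns i) C (reps i).

Let reps_cover i g : exists2 x, x \in reps i & Ns i (x^-1 * g).
Proof. exact: (projT2 (cid (fi_normal_cover (fiNs i)))). Qed.

Let reps_size i : size (reps i) <= C.
Proof. exact: (@leq_bigmax _ (fun i => size (reps i)) i). Qed.

Let eq_code i y y' : code i y = code i y' <-> Ns i (y^-1 * y').
Proof. exact: (eq_coset_code (fiNs i) (reps_size i) (reps_cover i)). Qed.

(* A point of [Omega] is a coset [y N_i] together with an encoding of the
   [H]-components [f] of the constants by their values on the representatives
   [reps i]; a single permutation group thus serves all [i] and all [f]. *)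
Let Fcode := {ffun 'I_k -> {ffun 'I_C -> H}}.
Let Omega := (I * Fcode * {set 'I_C})%type.
Let pi (a : I * Fcode) (y : G) : Omega := (a, code a.1 y).

Let pi_mulr a a' y y' g : pi a y = pi a' y' -> pi a (y * g) = pi a' (y' * g).
Proof.
case=> <- /(eq_code a.1 y y') Nyy'; congr (a, _).
by apply/eq_code; apply: (fi_mulr (fiNs a.1)).
Qed.

Let pi_invariant i (F : Fcode) (phi : Omega -> H) : N_invariant (Ns i) (phi \o pi (i, F)).
Proof. by move=> y y' /eq_code eq_yy'; rewrite /= /pi /= eq_yy'. Qed.

Let encode (f : 'I_k -> G -> H) i : I * Fcode :=
  (i, [ffun l => [ffun x : 'I_C => f l (nth 1 (reps i) x)]]).

Let decode l (o : Omega) : H := if [pick x in o.2] is Some x then o.1.2 l x else 1.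

Let decode_encode f i l y :
  N_invariant (Ns i) (f l) -> decode l (pi (encode f i) y) = f l y.
Proof.
rewrite /decode /=; case: pickP => [x /coset_codeP Nxy f_inv | none _].
  by rewrite !ffunE; apply: f_inv.
by have [x] := coset_code_neq0 (reps_size i) (reps_cover i) y; rewrite none.
Qed.

Lemma universal_mod_family (c : 'I_k -> G) :
  SysFin w -> exists v, forall i, universal_mod H w (Ns i) c v.
Proof.
move=> solvable.
pose Q := subg_of (wr_perm_group pi_mulr H).
pose cst l : Q := subg _ (wr_perm pi_mulr (decode l) (c l)).
have [z z_sol] := solvable Q cst.
have [q qE] := choice (fun j => wr_perm_groupP (subgP (z j))).
exists (fun j => (q j).2) => i f f_inv.
exists (fun j => (q j).1 \o pi (encode f i)); split=> [j|eq]; first exact: pi_invariant.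
pose p := val2 (fun l => (decode l, c l)) q.
have cstE x : sgval (val2 cst z x) = wr_perm pi_mulr (p x).1 (p x).2.
  by case: x => [l|j] /=; [rewrite subgK ?wr_perm_in | apply: qE].
have pi_one y : pi (encode f i) y = pi (encode f i) 1 -> Ns i y.
  by case=> /eq_code /(fi_sym (fiNs i)); rewrite invg1 mul1g.
have := weval_wr_perm_eq1 cstE (a := encode f i) pi_one (z_sol eq).
apply: (wr_is_one_congr (fiNs i)) => [[l|j]|[l|j] y|[l|j]] //=.
- exact: pi_invariant.
- exact: pi_invariant.
- exact: decode_encode.
- exact: fi_refl.
- exact: fi_refl.
Qed.

End UniversalFamily.

Lemma universal_mod_profinite (G : groupType) (H : finGroupType) (k n r : nat)
    (w : 'I_r -> FW k n) (a : 'I_k -> profinite G) (I : finType) (Ns : I -> G -> Prop) :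
  (forall i, fi_normal (Ns i)) -> SysFin w ->
  exists v, forall i, universal_mod H w (Ns i) (fun l => eta (Ns i) (a l)) v.
Proof.
move=> fiNs solvable; pose M y := forall i, Ns i y.
have fiM : fi_normal M := fi_normal_bigcap fiNs.
have [v univ] := universal_mod_family H fiNs (fun l => eta M (a l)) solvable.
exists v => i; apply: universal_mod_congr (univ i) => // [l|j].
  exact: (proj2_sig (a l)).
exact: fi_refl.
Qed.

Local Open Scope classical_set_scope.

Lemma ultra_cover (T : Type) (U : set_system T) (X : eqType) (s : seq X)
    (B : X -> set T) :
  UltraFilter U -> (forall p, exists2 x, x \in s & B x p) -> exists2 x, x \in s & U (B x).
Proof.
move=> ultraU cover; apply: contrapT => none.
have co_B (i : 'I_(size s)) : U (~` B (tnth (in_tuple s) i)).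
  have [UB|//] := in_ultra_setVsetC (B (tnth (in_tuple s) i)) ultraU.
  by case: none; exists (tnth (in_tuple s) i); rewrite ?mem_tnth.
have [p co_Bp] := filter_ex (filter_forall _ co_B).
have [x s_x Bxp] := cover p.
have /tnthP [i eq_x] : x \in in_tuple s by [].
by apply: (co_Bp i); rewrite -eq_x.
Qed.

Lemma ultra_coset (T : Type) (U : set_system T) (G : groupType) (N : G -> Prop)
    (t : T -> G) :
  UltraFilter U -> fi_normal N -> exists x, U [set p | N (x^-1 * t p)].
Proof.
move=> ultraU /fi_normal_cover [s cover].
have [x _ Ux] := ultra_cover (B := fun x => [set p | N (x^-1 * t p)]) ultraU
  (fun p => cover (t p)).
by exists x.
Qed.

Section ProfiniteCompactness.
Variables (G : groupType) (n : nat) (P : (G -> Prop) -> ('I_n -> G) -> Prop).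
Hypothesis P_congr : forall N v v', fi_normal N ->
  (forall j, N ((v j)^-1 * v' j)) -> P N v -> P N v'.
Hypothesis P_finite : forall (I : finType) (Ns : I -> G -> Prop),
  (forall i, fi_normal (Ns i)) -> exists v, forall i, P (Ns i) v.

Let V_ex (L : seq (G -> Prop)) : exists v, forall N, N \in L -> fi_normal N -> P N v.
Proof.
pose I := seq_sub [seq N <- L | `[< fi_normal N >]].
have [|v Pv] := @P_finite _ (fun N : I => ssval N).
  by case=> N /=; rewrite mem_filter => /andP [/asboolP].
exists v => N L_N fiN.
have fL_N : N \in [seq N <- L | `[< fi_normal N >]].
  by rewrite mem_filter L_N andbT; apply/asboolP.
exact: (Pv (SeqSub fL_N)).
Qed.

Theorem profinite_compactness :
  exists u : 'I_n -> profinite G, forall N, fi_normal N -> P N (fun j => eta N (u j)).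
Proof.
have [V PV] := choice V_ex.
pose B (l : seq (G -> Prop)) := [set L : seq (G -> Prop) | {subset l <= L}].
have filterB : Filter (filter_from setT B).
  apply: filter_fromT_filter; first by exists [::].
  move=> l1 l2; exists (l1 ++ l2) => L sub.
  by split=> N l_N; apply: sub; rewrite mem_cat l_N ?orbT.
have properB : ProperFilter (filter_from setT B).
  by apply: filter_from_proper => l _; exists l.
have [U [ultraU BU]] := ultraFilterLemma properB.
have U_in N : U [set L : seq (G -> Prop) | N \in L].
  by apply: BU; exists [:: N] => // L sub; apply: sub; rewrite mem_seq1.
(* [u j N] is the coset of [N] containing [V L j] for [U]-almost all [L]. *)
have /choice [uf ufP] (jN : 'I_n * (G -> Prop)) :
    exists x, fi_normal jN.2 -> U [set L | jN.2 (x^-1 * V L jN.1)].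
  have [fiN|] := pselect (fi_normal jN.2); last by exists 1.
  by have [x Ux] := ultra_coset (fun L => V L jN.1) ultraU fiN; exists x.
have uP j : compatible (fun N => uf (j, N)).
  move=> N M fiN fiM NM.
  have [L [/= UN UM]] := filter_ex (filterI (ufP (j, N) fiN) (ufP (j, M) fiM)).
  exact: (fi_trans fiM (NM _ UN) (fi_sym fiM UM)).
exists (fun j => exist _ _ (uP j)) => N fiN.
have U_near : U [set L | forall j, N ((uf (j, N))^-1 * V L j)].
  exact: (filter_forall _ (fun j => ufP (j, N) fiN)).
have [L [N_L VL]] := filter_ex (filterI (U_in N) U_near).
exact: (P_congr fiN (fun j => fi_sym fiN (VL j)) (PV L N N_L fiN)).
Qed.

End ProfiniteCompactness.

Theorem lemma2 (G : groupType) (H : finGroupType) (k n r : nat)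
    (w : 'I_r -> FW k n) (a : 'I_k -> profinite G) :
  finitely_generated G -> residually_finite G -> SysFin w ->
  exists u : 'I_n -> profinite G,
    forall N : G -> Prop, fi_normal N ->
    forall f : 'I_k -> (G -> H), (forall i, N_invariant N (f i)) ->
    exists phi : 'I_n -> (G -> H),
      (forall j, N_invariant N (phi j)) /\
      forall i : 'I_r,
        wr_is_one N
          (wr_eval (val2 (fun l => (f l, eta N (a l)))
                         (fun j => (phi j, eta N (u j)))) (w i)).
Proof.
move=> _ _ solvable.
apply: (profinite_compactness (P := fun N => universal_mod H w N (fun l => eta N (a l)))).
  by move=> N v v' fiN vv'; apply: universal_mod_congr => // l; apply: fi_refl.
by move=> I Ns fiNs; apply: universal_mod_profinite.
Qed.
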